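(* Let $G \in \mathbf{Bl}(\mathbf{k},\varphi)$ and let $\mathcal{D}$ be a maximum dissociation set of $G$. Then $G$ is not a graph with maximal spectral radius in $\mathbf{Bl}(\mathbf{k},\varphi)$ if any one of the following holds: (i) $G$ has a block $B$ with $|B\cap\mathcal{D}|=0$; (ii) $\mathcal{D}$ contains a cut vertex of $G$; (iii) $G$ has two adjacent blocks $B_1,B_2$ with $|B_1\cap\mathcal{D}|=|B_2\cap\mathcal{D}|=1$.
   Context: All graphs are finite, simple and connected. A block of $G$ is a maximal connected subgraph without a cut vertex; two blocks are adjacent if they share a cut vertex. A block graph is a connected graph each of whose blocks is a complete graph. A set $\mathcal{D}\subseteq V(G)$ is a dissociation set if the subgraph induced by $\mathcal{D}$ has maximum degree at most $1$; the dissociation number $\varphi(G)$ is the maximum size of a dissociation set, and a maximum dissociation set is one of size $\varphi(G)$ (the paper calls it a ''maximal dissociation set''). $\mathbf{Bl}(\mathbf{k},\varphi)$ denotes the class of block graphs on $\mathbf{k}$ vertices with dissociation number $\varphi$. $\rho(G)$ denotes the spectral radius (largest eigenvalue) of the adjacency matrix of $G$. A graph $\widehat G\in\mathbf{Bl}(\mathbf{k},\varphi)$ is called a graph with maximal spectral radius in $\mathbf{Bl}(\mathbf{k},\varphi)$ if $\rho(G)\le\rho(\widehat G)$ for all $G\in\mathbf{Bl}(\mathbf{k},\varphi)$. *)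

From HB Require Import structures.
From mathcomp Require Import all_boot all_order all_algebra.
From mathcomp Require Import boolp classical_sets reals.
Set Implicit Arguments. Unset Strict Implicit. Unset Printing Implicit Defensive.
Import Order.TTheory GRing.Theory Num.Theory.

Section Graphs.
Variable T : finType.
Implicit Types (g : rel T) (S D B : {set T}) (v : T).

Definition simple_graph g := irreflexive g /\ symmetric g.

Definition induced g S : rel T := fun x y => [&& x \in S, y \in S & g x y].

Definition connected_on g S :=
  forall x y, x \in S -> y \in S -> connect (induced g S) x y.

Definition connected_graph g := connected_on g [set: T].

Definition cut_vertex g v := ~ connected_on g ([set: T] :\ v).

Definition biconn_set g S :=
  (0 < #|S|)%N /\ connected_on g S /\ forall v, v \in S -> connected_on g (S :\ v).

Definition block g B :=
  biconn_set g B /\ forall S, B \subset S -> biconn_set g S -> S = B.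

Definition adjacent_blocks g B1 B2 :=
  [/\ block g B1, block g B2, B1 != B2 &
      exists v, [/\ v \in B1, v \in B2 & cut_vertex g v]].

Definition block_graph g :=
  connected_graph g /\
  forall B, block g B -> forall x y, x \in B -> y \in B -> x != y -> g x y.

Definition dissociation g D : bool :=
  [forall x in D, #|[set y in D | g x y]| <= 1].

Definition diss_number g : nat := \max_(D : {set T} | dissociation g D) #|D|.

Definition max_dissociation_set g D := dissociation g D /\ #|D| = diss_number g.

Definition adj_mx (R : realType) g : 'M[R]_#|T| :=
  \matrix_(i, j) (g (enum_val i) (enum_val j))%:R%R.

Definition spec_rad (R : realType) g : R :=
  sup [set l : R | eigenvalue (adj_mx R g) l].

End Graphs.

Definition Bl (k phi : nat) (g : rel 'I_k) :=
  [/\ simple_graph g, block_graph g & diss_number g = phi].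

Definition max_spectral_in_Bl (R : realType) (k phi : nat) (gh : rel 'I_k) :=
  Bl phi gh /\ forall g : rel 'I_k, Bl phi g -> (spec_rad R g <= spec_rad R gh)%R.

From HB Require Import structures.
From mathcomp Require Import all_boot all_order all_algebra zify boolp.
Set Implicit Arguments. Unset Strict Implicit. Unset Printing Implicit Defensive.
Import Order.TTheory GRing.Theory Num.Theory.

(* Under each of (i)-(iii) one finds two blocks B1, B2 sharing a vertex v such that
   D stays a dissociation set when B1 :|: B2 is made a clique: in (i) every new edge
   meets the block avoiding D; in (ii) a new edge inside D would give the cut vertex
   v two neighbours in D; in (iii), if v or the vertex of D in B1 or in B2 lies in a
   further block we merge at that vertex as in (ii), and otherwise these two vertices
   of D have no neighbour in D, so the single new edge between them is harmless.
   The merged graph is again a block graph, since a path leaving B1 :|: B2 and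
   coming back would be an ear of B1 or B2; adding edges cannot increase the
   dissociation number and D survives, so it is unchanged. The merged graph strictly
   contains the connected graph G, hence has larger spectral radius: the top
   eigenvector of G can be taken positive (Perron-Frobenius), and the Rayleigh
   quotient strictly increases on it. *)

Section InducedConnect.
Variable T : finType.
Implicit Types (e : rel T) (S K : {set T}).

Lemma symmetric_induced e S : symmetric e -> symmetric (induced e S).
Proof. by move=> es x y; rewrite /induced es andbCA. Qed.

Lemma connect_induced_sym e S : symmetric e -> connect_sym (induced e S).
Proof. by move=> es; apply/sym_connect_sym/symmetric_induced. Qed.

Lemma connect_induced_subset e S S' x y : S \subset S' ->
  connect (induced e S) x y -> connect (induced e S') x y.
Proof.
move=> SS'; apply: connect_sub => a b /and3P [aS bS eab].
by apply: connect1; rewrite /induced (subsetP SS' a aS) (subsetP SS' b bS).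
Qed.

Lemma connected_on_subrel e e' S : subrel e e' -> connected_on e S -> connected_on e' S.
Proof.
move=> ee' cS x y xS yS; apply: connect_sub (cS x y xS yS) => a b /and3P [aS bS eab].
by apply: connect1; rewrite /induced aS bS ee'.
Qed.

Lemma connect_induced_path e S x p : path e x p -> {subset x :: p <= S} ->
  connect (induced e S) x (last x p).
Proof.
elim: p x => [|y p IHp] x /=; first by move=> _ _; apply: connect0.
move=> /andP [exy pp] pS; apply: connect_trans (IHp y pp _).
  by apply: connect1; rewrite /induced exy !pS ?mem_head ?inE ?eqxx ?orbT.
by move=> z zp; apply: pS; rewrite inE zp orbT.
Qed.

Lemma path_induced e S x p : path (induced e S) x p -> path e x p /\ {subset p <= S}.
Proof.
elim: p x => [|y p IHp] x //= /andP [/and3P [_ yS exy] /IHp [pp pS]].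
by split; [rewrite exy | move=> z; rewrite inE => /orP [/eqP -> | /pS]].
Qed.

Lemma connected_graph_connect e x y : connected_graph e -> connect (induced e [set: T]) x y.
Proof. by move/(_ x y); rewrite !inE; apply. Qed.

Lemma connected_on_root e S r : symmetric e ->
  (forall x, x \in S -> connect (induced e S) r x) -> connected_on e S.
Proof.
move=> es rS x y xS yS; apply: connect_trans (rS y yS).
by rewrite connect_induced_sym //; apply: rS.
Qed.

Lemma connected_on_card_le1 e S : (#|S| <= 1)%N -> connected_on e S.
Proof. by move=> /card_le1_eqP S1 x y xS yS; rewrite (S1 x y xS yS) connect0. Qed.

Lemma path_enters_set e e' K S w p : (forall y z, y \notin K -> e' y z -> e y z) ->
  w \notin K -> path (induced e' S) w p -> last w p \in K ->
  exists x c, [/\ c \in K, c \in S, x \notin K, connect (induced e (~: K)) w x & e x c].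
Proof.
move=> e'e; elim: p w => [|y p IHp] w wK /=; first by rewrite (negbTE wK).
move=> /andP [/and3P [wS yS e'wy] pp] lK.
have ewy : e w y by apply: e'e.
have [yK|yK] := boolP (y \in K); first by exists w, y; split => //; apply: connect0.
have [x [c [cK cS xK yx exc]]] := IHp y yK pp lK.
exists x, c; split => //; apply: connect_trans yx.
by apply: connect1; rewrite /induced !inE wK yK.
Qed.

Lemma connected_reach_nbr e v w : connected_graph e -> w != v ->
  exists2 x, connect (induced e (~: [set v])) w x & e x v.
Proof.
move=> ce wv; have /connectP [p pp lp] := connected_graph_connect w v ce.
have wK : w \notin [set v] by rewrite inE.
have [|x [c [cK _ _ wx exc]]] := path_enters_set (fun _ _ _ => id) wK pp.
  by rewrite -lp set11.
by exists x; rewrite // -(set1P cK).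
Qed.

End InducedConnect.

Section Blocks.
Variable T : finType.
Variable g : rel T.
Hypothesis gs : symmetric g.
Implicit Types (S X : {set T}).

Lemma biconn_sub_block S : biconn_set g S -> exists2 B, block g B & S \subset B.
Proof.
move=> bS; pose P (B : {set T}) := (S \subset B) && `[< biconn_set g B >].
have PS : P S by rewrite /P subxx; apply/asboolP.
case: (arg_maxnP (fun B : {set T} => #|B|) PS) => B /andP [SB /asboolP bB] maxB.
exists B => //; split => // S' BS' bS'; apply/eqP; rewrite eq_sym eqEcard BS'.
by apply: maxB; rewrite /P (subset_trans SB BS'); apply/asboolP.
Qed.

Lemma biconn_edge x y : g x y -> biconn_set g [set x; y].
Proof.
move=> gxy; split; first by apply/card_gt0P; exists x; rewrite !inE eqxx.
split=> [|u uxy].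
  apply: (connected_on_root (r := x) gs) => z /set2P [->|->]; first exact: connect0.
  by apply: connect1; rewrite /induced !inE !eqxx orbT gxy.
apply: connected_on_card_le1; have := cardsD1 u [set x; y]; rewrite uxy.
have : #|[set x; y]| <= 2 by rewrite cards2; case: (x != y).
lia.
Qed.

Lemma edge_in_block x y : g x y -> exists B, [/\ block g B, x \in B & y \in B].
Proof.
move=> /biconn_edge /biconn_sub_block [B bB /subsetP xyB].
by exists B; split; rewrite // xyB // !inE eqxx ?orbT.
Qed.

Lemma ear_connect a s b u z : path g a (rcons s b) -> uniq (a :: rcons s b) ->
  z \in s -> z != u -> exists w, [/\ w \in [:: a; b], w != u &
    connect (induced g ([set x in a :: rcons s b] :\ u)) z w].
Proof.
move=> ps us zs zu; case/splitPr: zs ps us => p1 p2.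
rewrite rcons_cat -cat_cons cat_path => /andP [pp1 /andP [gz pp2]] uP.
set P := (a :: p1) ++ _ in uP *.
have [up1|up1] := boolP (u \in a :: p1).
  have uS : {subset z :: rcons p2 b <= [set x in P] :\ u}.
    move=> y yS; rewrite in_setD1 in_set /P mem_cat yS orbT andbT.
    apply: contraTneq yS => -> {y}; apply/negP => us2.
    by move: uP; rewrite /P cat_uniq => /and3P [_ /hasPn /(_ u us2)]; rewrite up1.
  exists b; split; rewrite ?inE ?eqxx ?orbT //.
    have /uS : b \in z :: rcons p2 b by rewrite inE mem_rcons mem_head orbT.
    by rewrite in_setD1 => /andP [].
  by have := connect_induced_path pp2 uS; rewrite last_rcons.
have uS : {subset a :: rcons p1 z <= [set x in P] :\ u}.
  move=> y; rewrite -rcons_cons mem_rcons inE => /orP [/eqP ->|yS].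
    by rewrite in_setD1 in_set /P mem_cat mem_head orbT andbT.
  rewrite in_setD1 in_set /P mem_cat yS andbT.
  by apply: contraNneq up1 => <-.
have pz : path g a (rcons p1 z) by rewrite rcons_path pp1.
exists a; split; rewrite ?mem_head //.
  by apply: contraNneq up1 => <-; rewrite mem_head.
by rewrite connect_induced_sym //; have := connect_induced_path pz uS; rewrite last_rcons.
Qed.

Lemma biconn_ear X a b s : biconn_set g X -> a \in X -> b \in X -> a != b ->
  uniq s -> {in s, forall z, z \notin X} -> path g a (rcons s b) ->
  biconn_set g (X :|: [set z in s]).
Proof.
move=> [_ [cX cXu]] aX bX ab us sX ps; set Y := X :|: _.
have uP : uniq (a :: rcons s b).
  rewrite /= rcons_uniq mem_rcons inE negb_or ab us andbT.
  by rewrite (contraL (sX a) aX) (contraL (sX b) bX).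
have PY : [set x in a :: rcons s b] \subset Y.
  apply/subsetP => x; rewrite in_set -rcons_cons mem_rcons !inE.
  by case/or3P => [/eqP ->|/eqP ->|->]; rewrite ?aX ?bX ?orbT.
have toX u z : z \in Y :\ u ->
    exists2 w, w \in X :\ u & connect (induced g (Y :\ u)) z w.
  rewrite !inE => /andP [zu /orP [zX|zs]]; first by exists z; rewrite ?inE ?zu ?connect0.
  have [w [wab wu zw]] := ear_connect ps uP zs zu.
  exists w; first by rewrite !inE wu; move: wab; rewrite !inE => /orP [] /eqP ->.
  exact: connect_induced_subset (setSD _ PY) zw.
split; first by apply/card_gt0P; exists a; rewrite inE aX.
split=> [|u uY].
  apply: (connected_on_root (r := a) gs) => z; rewrite !inE => /orP [zX|zs].
    exact: connect_induced_subset (subsetUl _ _) (cX a z aX zX).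
  have zb : z \in Y :\ b by rewrite !inE zs orbT andbT; apply: contraTneq bX => <-; apply: sX.
  have [w] := toX b z zb; rewrite inE => /andP [_ wX] zw.
  apply: connect_trans (connect_induced_subset (subsetUl _ _) (cX a w aX wX)) _.
  by rewrite connect_induced_sym //; apply: connect_induced_subset zw; apply: subD1set.
have cXu' : connected_on g (X :\ u).
  have [uX|uX] := boolP (u \in X); first exact: cXu.
  by rewrite (setDidPl _); rewrite // disjoint_sym disjoints1.
have [r rXu] : exists r, r \in X :\ u.
  by have [<-|au] := eqVneq a u; [exists b; rewrite !inE eq_sym ab | exists a; rewrite !inE au aX].
apply: (connected_on_root (r := r) gs) => z /toX [w wXu zw].
apply: connect_trans (connect_induced_subset (setSD _ (subsetUl _ _)) (cXu' r w rXu wXu)) _.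
by rewrite connect_induced_sym.
Qed.

Lemma block_ear_nil X a b s : block g X -> a \in X -> b \in X -> a != b ->
  uniq s -> {in s, forall z, z \notin X} -> path g a (rcons s b) -> s = [::].
Proof.
move=> [bX maxX] aX bX' ab us sX ps.
have := maxX _ (subsetUl _ _) (biconn_ear bX aX bX' ab us sX ps).
case: s {us ps} sX => // z s sX /setUidPl /subsetP /(_ z).
by rewrite inE mem_head => /(_ isT) zX; have := sX z (mem_head _ _); rewrite zX.
Qed.


Lemma block_adjacent_block B y : connected_graph g -> block g B -> y \notin B ->
  exists B' x, [/\ block g B', B' != B, x \in B & x \in B'].
Proof.
move=> cg bB yB; have [b0 b0B] : exists b0, b0 \in B by apply/card_gt0P; case: bB => [[]].
have /connectP [p pp lp] := connected_graph_connect b0 y cg.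
have b0K : b0 \notin ~: B by rewrite inE b0B.
have [|x [c [cK _ xK _ gxc]]] := path_enters_set (fun _ _ _ => id) b0K pp.
  by rewrite -lp inE.
have [B' [bB' xB' cB']] := edge_in_block gxc.
move: cK xK; rewrite !inE negbK => cB xB.
by exists B', x; split => //; apply: contraNneq cB => <-.
Qed.

Lemma block_not_subset X Y : block g X -> block g Y -> X != Y -> ~~ (X \subset Y).
Proof. by move=> [_ maxX] [bY _] XY; apply: contra XY => /maxX /(_ bY) ->. Qed.

Section BlockGraph.
Hypothesis hb : block_graph g.

Lemma no_path_across_blocks X Y v c c' s :
  block g X -> block g Y -> v \in X -> v \in Y ->
  c \in X -> c \notin Y -> c' \in Y -> c' \notin X ->
  uniq s -> {in s, forall z, z \notin X :|: Y} -> ~~ path g c (rcons s c').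
Proof.
move=> bX bY vX vY cX cY c'Y c'X us sXY; apply/negP => ps.
have sX : {in rcons s c', forall z, z \notin X}.
  move=> z; rewrite mem_rcons inE => /orP [/eqP -> //|/sXY].
  by rewrite inE negb_or => /andP [].
have c's : c' \notin s by apply: contraL c'Y => /sXY; rewrite inE negb_or => /andP [].
have gc'v : g c' v by apply: (hb.2 _ bY c' v c'Y vY); apply: contraNneq c'X => ->.
have cv : c != v by apply: contraNneq cY => ->.
have := block_ear_nil bX cX vX cv (s := rcons s c').
rewrite rcons_uniq c's us rcons_path ps last_rcons gc'v => /(_ isT sX isT).
by case: s {us sXY ps sX c's}.
Qed.

Lemma no_edge_across_blocks X Y v x y :
  block g X -> block g Y -> v \in X -> v \in Y ->
  x \in X -> x \notin Y -> y \in Y -> y \notin X -> ~~ g x y.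
Proof.
move=> bX bY vX vY xX xY yY yX.
have := no_path_across_blocks bX bY vX vY xX xY yY yX (s := [::]) isT.
by rewrite /= andbT; apply.
Qed.

End BlockGraph.
End Blocks.

Definition merge_blocks (T : finType) (g : rel T) (B1 B2 : {set T}) : rel T :=
  fun x y => g x y || [&& x != y, x \in B1 :|: B2 & y \in B1 :|: B2].

Section Merge.
Variable T : finType.
Variable g : rel T.
Hypotheses (gs : symmetric g) (gi : irreflexive g) (hb : block_graph g).
Variables (B1 B2 : {set T}) (v : T).
Hypotheses (bB1 : block g B1) (bB2 : block g B2) (nB : B1 != B2)
  (vB1 : v \in B1) (vB2 : v \in B2).
Local Notation C := (B1 :|: B2).
Local Notation gm := (merge_blocks g B1 B2).

Lemma merge_blocks_simple : simple_graph gm.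
Proof.
split; first by move=> x; rewrite /merge_blocks gi eqxx.
by move=> x y; rewrite /merge_blocks gs eq_sym (andbC (y \in C)).
Qed.

Lemma merge_blocks_sub : subrel g gm.
Proof. by move=> x y; rewrite /merge_blocks => ->. Qed.

Lemma merge_blocks_out x y : x \notin C -> gm x y -> g x y.
Proof. by rewrite /merge_blocks => /negbTE xC /orP [//|/and3P []]; rewrite xC. Qed.

Lemma merge_blocks_new_edge x y : gm x y -> ~~ g x y ->
  [/\ x \in B1, x \notin B2, y \in B2 & y \notin B1] \/
  [/\ x \in B2, x \notin B1, y \in B1 & y \notin B2].
Proof.
move=> /orP [->//|/and3P [xy xC yC]] ngxy.
have both X : block g X -> x \in X -> y \in X -> False.
  by move=> bX xX yX; case/negP: ngxy; apply: (hb.2 _ bX).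
case/setUP: xC => xB; case/setUP: yC => yB.
- by case: (both B1 bB1 xB yB).
- by left; split=> //; apply/negP => ?; [apply: (both B2) | apply: (both B1)].
- by right; split=> //; apply/negP => ?; [apply: (both B1) | apply: (both B2)].
- by case: (both B2 bB2 xB yB).
Qed.

Lemma merge_blocks_proper : exists x y, gm x y && ~~ g x y.
Proof.
have [x x1 x2] := subsetPn (block_not_subset bB1 bB2 nB).
have [y y2 y1] : exists2 y, y \in B2 & y \notin B1.
  by apply/subsetPn/(block_not_subset bB2 bB1); rewrite eq_sym.
exists x, y; rewrite (no_edge_across_blocks gs hb bB1 bB2 vB1 vB2) // andbT.
by rewrite /merge_blocks !inE x1 y2 orbT /= andbT; apply/orP; right; apply: contraNneq x2 => ->.
Qed.

Lemma merge_outside_attach x x' c c' : x \notin C -> connect (induced g (~: C)) x x' ->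
  g x c -> g x' c' -> c \in C -> c' \in C -> c = c'.
Proof.
move=> xC /connectP [p pp ->] gxc; case/shortenP: pp => p' /path_induced [pp' p'C] up' _.
move=> gc' cC c'C; apply/eqP/negPn/negP => cc'.
set s := x :: p'.
have sC : {in s, forall z, z \notin C}.
  by move=> z; rewrite /s inE => /orP [/eqP -> //|/p'C]; rewrite inE.
have ps : path g c (rcons s c') by rewrite /s /= rcons_path pp' gc' gs gxc.
(* Otherwise [c, x, .., x', c'], continued to [v] if needed, is an ear of [B1] or [B2]. *)
have same X : block g X -> X \subset C -> c \in X -> c' \in X -> False.
  move=> bX XC cX c'X; suff: s = [::] by [].
  apply: (block_ear_nil gs bX cX c'X cc' up') ps => z /sC.
  exact/contra/subsetP.
have across X Y : block g X -> block g Y -> v \in X -> v \in Y -> X :|: Y = C ->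
    c \in X -> c \notin Y -> c' \in Y -> c' \notin X -> False.
  move=> bX bY vX vY XY cX cY c'Y c'X.
  apply: (negP (no_path_across_blocks gs hb bX bY vX vY cX cY c'Y c'X up' _)) ps.
  by rewrite XY.
case/setUP: cC => [c1|c2]; case/setUP: c'C => [c'1|c'2].
- exact: (same B1 bB1 (subsetUl _ _)).
- have [c'1|c'1] := boolP (c' \in B1); first exact: (same B1 bB1 (subsetUl _ _)).
  have [c2|c2] := boolP (c \in B2); first exact: (same B2 bB2 (subsetUr _ _)).
  exact: (across B1 B2).
- have [c'2|c'2] := boolP (c' \in B2); first exact: (same B2 bB2 (subsetUr _ _)).
  have [c1|c1] := boolP (c \in B1); first exact: (same B1 bB1 (subsetUl _ _)).
  by apply: (across B2 B1); rewrite // setUC.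
- exact: (same B2 bB2 (subsetUr _ _)).
Qed.

Lemma merge_connected_enter S w c : connected_on gm S ->
  w \in S -> w \notin C -> c \in S -> c \in C ->
  exists x c', [/\ c' \in C, c' \in S, x \notin C, connect (induced g (~: C)) w x & g x c'].
Proof.
move=> cS wS wC cS' cC; have /connectP [p pp lp] := cS w c wS cS'.
by apply: (path_enters_set merge_blocks_out wC pp); rewrite -lp.
Qed.

Lemma merge_block_subset B c1 c2 : block gm B ->
  c1 \in B -> c2 \in B -> c1 \in C -> c2 \in C -> c1 != c2 -> B \subset C.
Proof.
move=> [[_ [cB cBu]] _] c1B c2B c1C c2C c12; apply/subsetP => w wB; apply: contraT => wC.
have [x [c [cC cB' xC wx gxc]]] := merge_connected_enter cB wB wC c1B c1C.
have [c' [c'B c'C c'c]] : exists c', [/\ c' \in B, c' \in C & c' != c].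
  by have [<-|c1c] := eqVneq c1 c; [exists c2; rewrite eq_sym | exists c1].
have wBc : w \in B :\ c by rewrite !inE wB andbT; apply: contraNneq wC => ->.
have c'Bc : c' \in B :\ c by rewrite !inE c'B c'c.
have [x' [c'' [c''C c''B _ wx' gxc'']]] := merge_connected_enter (cBu c cB') wBc wC c'Bc c'C.
have xx' : connect (induced g (~: C)) x x'.
  by apply: connect_trans wx'; rewrite connect_induced_sym.
by move: c''B; rewrite -(merge_outside_attach xC xx' gxc gxc'' cC c''C) setD11.
Qed.

Lemma merge_block_biconn B : block gm B ->
  {in B &, forall c1 c2, c1 \in C -> c2 \in C -> c1 = c2} -> biconn_set g B.
Proof.
move=> [[B_gt0 [cB cBu]] _] BC1.
have eqi (S : {set T}) : S \subset B -> induced gm S =2 induced g S.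
  move=> /subsetP SB a b; rewrite /induced /merge_blocks.
  have [aS|//] := boolP (a \in S); have [bS|//] := boolP (b \in S); rewrite /=.
  apply/orP/idP => [[//|/and3P [ab aC bC]]|->]; last by left.
  by rewrite (BC1 a b (SB a aS) (SB b bS) aC bC) eqxx in ab.
split=> //; split=> [a b aB bB|u uB a b aB bB].
  by rewrite -(eq_connect (eqi B (subxx B))); apply: cB.
by rewrite -(eq_connect (eqi (B :\ u) (subD1set B u))); apply: cBu.
Qed.

Lemma merge_blocks_block_graph : block_graph gm.
Proof.
split; first exact: connected_on_subrel merge_blocks_sub hb.1.
move=> B bB x y xB yB xy.
case: (pselect (exists c1 c2, [/\ c1 \in B, c2 \in B, c1 \in C, c2 \in C & c1 != c2])).
  move=> [c1 [c2 [c1B c2B c1C c2C c12]]].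
  have /subsetP BC := merge_block_subset bB c1B c2B c1C c2C c12.
  by rewrite /merge_blocks xy !BC ?orbT.
move=> BC1; have [B0 bB0 /subsetP BB0] : exists2 B0, block g B0 & B \subset B0.
  apply/biconn_sub_block/(merge_block_biconn bB) => // c1 c2 c1B c2B c1C c2C.
  by apply/eqP/negPn/negP => c12; apply: BC1; exists c1, c2.
by apply/merge_blocks_sub/(hb.2 _ bB0); rewrite ?BB0.
Qed.

End Merge.

Section Dissociation.
Variable T : finType.
Implicit Types (g : rel T) (D : {set T}).

Lemma dissociationP g D :
  reflect (forall x y z, x \in D -> y \in D -> z \in D -> g x y -> g x z -> y = z)
          (dissociation g D).
Proof.
apply: (iffP forallP) => [H x y z xD yD zD gxy gxz | H x].
  by have /implyP /(_ xD) /card_le1_eqP := H x; apply; rewrite inE ?yD ?zD.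
apply/implyP => xD; apply/card_le1_eqP => y z.
by rewrite !inE => /andP [yD gxy] /andP [zD gxz]; apply: (H x).
Qed.

Lemma dissociation_subrel_in g g' D : {in D &, subrel g' g} ->
  dissociation g D -> dissociation g' D.
Proof.
move=> g'g /dissociationP dD; apply/dissociationP => x y z xD yD zD gxy gxz.
by apply: (dD x); rewrite ?(g'g x).
Qed.

Lemma dissociation_card_le g D : dissociation g D -> #|D| <= diss_number g.
Proof. exact: (@leq_bigmax_cond _ (dissociation g) (fun S : {set T} => #|S|)). Qed.

Lemma diss_number_subrel g g' D : subrel g g' -> dissociation g' D ->
  #|D| = diss_number g -> diss_number g' = diss_number g.
Proof.
move=> gg' dD cD; apply/eqP; rewrite eqn_leq -[X in _ && (X <= _)]cD.
rewrite dissociation_card_le // andbT; apply/bigmax_leqP => S dS.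
by apply/dissociation_card_le/(dissociation_subrel_in _ dS) => x y _ _; apply: gg'.
Qed.

Lemma diss_number_gt0 g (x : T) : 0 < diss_number g.
Proof.
apply: leq_trans (dissociation_card_le (D := [set x]) _); first by rewrite cards1.
by apply/dissociationP => y z w /set1P -> /set1P -> /set1P ->.
Qed.

Lemma dissociation_join_isolated g g' D a b :
  dissociation g D -> {in D, forall z, ~~ g a z} -> {in D, forall z, ~~ g b z} ->
  {in D &, forall x y, g' x y -> ~~ g x y -> (x == a) && (y == b) || (x == b) && (y == a)} ->
  dissociation g' D.
Proof.
move=> /dissociationP dD na nb new; apply/dissociationP.
have nbr x y : x \in D -> y \in D -> g' x y ->
    [/\ x = a -> y = b, x = b -> y = a & x != a -> x != b -> g x y].
  move=> xD yD g'xy; have [gxy|ngxy] := boolP (g x y).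
    by split=> // xab; move: gxy; rewrite xab ?(negbTE (na y yD)) ?(negbTE (nb y yD)).
  by case/orP: (new x y xD yD g'xy ngxy) => /andP [/eqP -> /eqP ->]; split; rewrite // eqxx.
move=> x y z xD yD zD /(nbr x y xD yD) [ya yb yg] /(nbr x z xD zD) [za zb zg].
have [xa|xa] := eqVneq x a; first by rewrite ya // za.
have [xb|xb] := eqVneq x b; first by rewrite yb // zb.
exact: dD x y z xD yD zD (yg xa xb) (zg xa xb).
Qed.

End Dissociation.

Definition dissociation_mergeable (T : finType) (g : rel T) (D : {set T}) :=
  exists B1 B2 v, [/\ block g B1, block g B2, B1 != B2, v \in B1 & v \in B2] /\
    dissociation (merge_blocks g B1 B2) D.

Section Mergeable.
Variable T : finType.
Variable g : rel T.
Hypotheses (gs : symmetric g) (gi : irreflexive g) (hb : block_graph g).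
Variable D : {set T}.
Hypothesis dD : dissociation g D.

Lemma mergeable_shared_vertex_in_D B1 B2 v : block g B1 -> block g B2 -> B1 != B2 ->
  v \in B1 -> v \in B2 -> v \in D -> dissociation_mergeable g D.
Proof.
move=> bB1 bB2 nB vB1 vB2 vD; exists B1, B2, v; split => //.
have /dissociationP uniqD := dD.
apply: (dissociation_subrel_in _ dD) => d y dD' yD gdy; apply/negPn/negP => ngdy.
have key X Y : block g X -> block g Y -> v \in X -> v \in Y ->
    d \in X -> d \notin Y -> y \in Y -> y \notin X -> False.
  move=> bX bY vX vY dX dY yY yX.
  have gvd : g v d by apply: (hb.2 _ bX) => //; apply: contraNneq dY => <-.
  have gvy : g v y by apply: (hb.2 _ bY) => //; apply: contraNneq yX => <-.
  by move: dY; rewrite (uniqD v d y vD dD' yD gvd gvy) yY.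
case: (merge_blocks_new_edge hb bB1 bB2 gdy ngdy) => -[].
  exact: (key B1 B2).
exact: (key B2 B1).
Qed.

Lemma mergeable_block_without_D B : #|D| = diss_number g -> block g B ->
  #|B :&: D| = 0 -> dissociation_mergeable g D.
Proof.
move=> cD bB /eqP; rewrite cards_eq0 => /eqP BD.
have nBD z : z \in B -> z \notin D.
  by move=> zB; apply/negP => zD; move/setP: BD => /(_ z); rewrite !inE zB zD.
have [b0 b0B] : exists b0, b0 \in B by apply/card_gt0P; case: bB => [[]].
have [d0 d0D] : exists d0, d0 \in D.
  by apply/set0Pn; rewrite -card_gt0 cD (diss_number_gt0 g b0).
have [B' [x [bB' B'B xB xB']]] := block_adjacent_block gs hb.1 bB (contraL (nBD d0) d0D).
exists B, B', x; split; first by split; rewrite // eq_sym.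
apply: (dissociation_subrel_in _ dD) => d y dD' yD gdy; apply/negPn/negP => ngdy.
case: (merge_blocks_new_edge hb bB bB' gdy ngdy) => [[dB _ _ _]|[_ _ yB _]].
  by have := nBD d dB; rewrite dD'.
by have := nBD y yB; rewrite yD.
Qed.

Lemma mergeable_cut_vertex_in_D v : v \in D -> cut_vertex g v -> dissociation_mergeable g D.
Proof.
move=> vD; rewrite /cut_vertex setTD => cut.
have [a [b [av bv nab]]] : exists a b,
    [/\ a != v, b != v & ~~ connect (induced g (~: [set v])) a b].
  apply: contrapT => H; apply: cut => a b aS bS; apply/negPn/negP => nab; apply: H.
  by exists a, b; move: aS bS; rewrite !inE.
have [xa axa gxav] := connected_reach_nbr hb.1 av.
have [xb bxb gxbv] := connected_reach_nbr hb.1 bv.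
have [Ba [bBa xaBa vBa]] := edge_in_block gs gxav.
have [Bb [bBb xbBb vBb]] := edge_in_block gs gxbv.
have [eB|nB] := eqVneq Ba Bb; last exact: (mergeable_shared_vertex_in_D bBa bBb nB vBa vBb vD).
have nv x : g x v -> x \in ~: [set v] by move=> gxv; rewrite !inE; apply: contraTneq gxv => ->; rewrite gi.
case/negP: nab; apply: connect_trans axa _; rewrite connect_induced_sym //.
apply: connect_trans bxb _; have [->|xba] := eqVneq xb xa; first exact: connect0.
by apply: connect1; rewrite /induced !nv // (hb.2 _ bBb) // -eB.
Qed.

Lemma mergeable_or_sole_block X x : block g X -> x \in X -> x \in D ->
  (forall B, block g B -> x \in B -> B = X) \/ dissociation_mergeable g D.
Proof.
move=> bX xX xD; case: (pselect (forall B, block g B -> x \in B -> B = X)); first by left.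
move=> /existsNP [B /not_implyP [bB /not_implyP [xB /eqP BX]]]; right.
by apply: (mergeable_shared_vertex_in_D bX bB _ xX xB xD); rewrite eq_sym.
Qed.

Lemma sole_block_D_isolated X x : X :&: D = [set x] ->
  (forall B, block g B -> x \in B -> B = X) -> {in D, forall z, ~~ g x z}.
Proof.
move=> XD sole z zD; apply/negP => gxz.
have [B [bB xB zB]] := edge_in_block gs gxz.
have : z \in X :&: D by rewrite inE -(sole B bB xB) zB zD.
by rewrite XD => /set1P zx; move: gxz; rewrite zx gi.
Qed.

Lemma mergeable_adjacent_single_D B1 B2 : adjacent_blocks g B1 B2 ->
  #|B1 :&: D| = 1 -> #|B2 :&: D| = 1 -> dissociation_mergeable g D.
Proof.
case=> bB1 bB2 nB [v [vB1 vB2 _]] /eqP /cards1P [a Ea] /eqP /cards1P [b Eb].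
have [vD|_] := boolP (v \in D).
  exact: (mergeable_shared_vertex_in_D bB1 bB2 nB vB1 vB2 vD).
have inB1D z : (z \in B1) && (z \in D) = (z == a) by rewrite -in_setI Ea inE.
have inB2D z : (z \in B2) && (z \in D) = (z == b) by rewrite -in_setI Eb inE.
have /andP [a1 aD] : (a \in B1) && (a \in D) by rewrite inB1D.
have /andP [b2 bD] : (b \in B2) && (b \in D) by rewrite inB2D.
have [solea|//] := mergeable_or_sole_block bB1 a1 aD.
have [soleb|//] := mergeable_or_sole_block bB2 b2 bD.
exists B1, B2, v; split => //.
apply: (dissociation_join_isolated dD (sole_block_D_isolated Ea solea)
          (sole_block_D_isolated Eb soleb)) => x y xD yD gxy ngxy.
case: (merge_blocks_new_edge hb bB1 bB2 gxy ngxy) => -[xB _ yB _];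
  [apply/orP; left | apply/orP; right]; by rewrite -inB1D -inB2D xB yB xD yD.
Qed.

End Mergeable.

(* Imported only now: [classical_sets] shadows [subsetP] and [in_setT] of [finset]. *)
From mathcomp Require Import classical_sets reals topology normedtype derive ring lra.
Import numFieldNormedType.Exports.
Local Open Scope ring_scope.

Section RowDot.
Variables (R : realType) (n : nat).
Implicit Types (u v w : 'rV[R]_n).

Definition dot u v : R := (u *m v^T) 0 0.

Lemma dotE u v : dot u v = \sum_i u 0 i * v 0 i.
Proof. by rewrite /dot mxE; apply: eq_bigr => i _; rewrite mxE. Qed.

Lemma dotC u v : dot u v = dot v u.
Proof. by rewrite !dotE; apply: eq_bigr => i _; rewrite mulrC. Qed.

Lemma dotDl u v w : dot (u + v) w = dot u w + dot v w.
Proof. by rewrite /dot mulmxDl mxE. Qed.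

Lemma dotNl u w : dot (- u) w = - dot u w.
Proof. by rewrite /dot mulNmx mxE. Qed.

Lemma dotZl a u w : dot (a *: u) w = a * dot u w.
Proof. by rewrite /dot -scalemxAl mxE. Qed.

Lemma dotDr u v w : dot w (u + v) = dot w u + dot w v.
Proof. by rewrite dotC dotDl !(dotC w). Qed.

Lemma dotZr a u w : dot w (a *: u) = a * dot w u.
Proof. by rewrite dotC dotZl dotC. Qed.

Lemma dot_ge0 u : 0 <= dot u u.
Proof. by rewrite dotE sumr_ge0 // => i _; rewrite -expr2 sqr_ge0. Qed.

Lemma dot_eq0 u : (dot u u == 0) = (u == 0).
Proof.
apply/idP/eqP => [|->]; last by rewrite /dot mul0mx mxE.
rewrite dotE psumr_eq0 => [/allP u0|i _]; last by rewrite -expr2 sqr_ge0.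
apply/rowP => i; rewrite mxE; apply/eqP; rewrite -sqrf_eq0 expr2.
exact: u0 (mem_index_enum i).
Qed.

Lemma dot_gt0 u : u != 0 -> 0 < dot u u.
Proof. by move=> u0; rewrite lt_def dot_eq0 u0 dot_ge0. Qed.

Lemma dot_continuous : continuous (fun u : 'rV[R]_n => dot u u).
Proof.
have -> : (fun u : 'rV[R]_n => dot u u) = fun u => \sum_i u 0 i * u 0 i.
  by apply: funext => u; rewrite dotE.
apply: continuous_big; first exact: add_continuous.
by move=> i _ u; apply: continuousM; apply: coord_continuous.
Qed.

Lemma unit_sphere_compact : compact [set u : 'rV[R]_n | dot u u = 1].
Proof.
apply: (@subclosed_compact _ _ [set u : 'rV[R]_n | forall i, `[-1, 1]%classic (u 0 i)]).
- apply: (@preimage_closed _ _ (fun u : 'rV[R]_n => dot u u) [set x | x = 1]).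
    by move=> u _; apply: dot_continuous.
  exact: closed_eq.
- by apply: (@rV_compact _ _ (fun=> `[(-1 : R), 1]%classic)) => _; apply: segment_compact.
- move=> u /= u1 i; rewrite in_itv /= -ler_norml -ler_sqr ?nnegrE //.
  rewrite expr1n real_normK ?num_real // -u1 dotE (bigD1 i) //= -expr2 lerDl.
  by rewrite sumr_ge0 // => j _; rewrite -expr2 sqr_ge0.
Qed.

End RowDot.

Definition qform (R : realType) n (M : 'M[R]_n) (x : 'rV[R]_n) : R := dot (x *m M) x.

Section QuadraticForm.
Variables (R : realType) (n : nat).
Implicit Types (M N : 'M[R]_n) (x y z : 'rV[R]_n).

Lemma qformE M x : qform M x = \sum_i \sum_j x 0 j * M j i * x 0 i.
Proof. by rewrite /qform dotE; apply: eq_bigr => i _; rewrite mxE big_distrl. Qed.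

Lemma qformZ M a x : qform M (a *: x) = a ^+ 2 * qform M x.
Proof. by rewrite /qform -scalemxAl dotZl dotZr expr2 mulrA. Qed.

Lemma qformBl M N x : qform (M - N) x = qform M x - qform N x.
Proof. by rewrite /qform mulmxBr dotDl dotNl. Qed.

Lemma qform_continuous M : continuous (qform M).
Proof.
have -> : qform M = fun x => \sum_i (\sum_j x 0 j * M j i) * x 0 i.
  by apply: funext => x; rewrite /qform dotE; apply: eq_bigr => i _; rewrite mxE.
apply: continuous_big; first exact: add_continuous.
move=> i _ x; apply: continuousM; last exact: coord_continuous.
apply: (continuous_big (P := xpredT)); first exact: add_continuous.
move=> j _ y; apply: continuousM; first exact: coord_continuous.
exact: cst_continuous.
Qed.

Lemma qform_norm_ge M x : (forall i j, 0 <= M i j) -> qform M x <= qform M (\row_i `|x 0 i|).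
Proof.
move=> M0; rewrite !qformE; apply: le_trans (ler_norm _) _.
apply: le_trans (ler_norm_sum _ _ _) _; apply: ler_sum => i _.
apply: le_trans (ler_norm_sum _ _ _) _; apply: ler_sum => j _.
by rewrite !normrM !mxE (ger0_norm (M0 j i)).
Qed.

Lemma qform_gt0 M x i0 j0 : (forall i j, 0 <= M i j) -> (forall i, 0 < x 0 i) ->
  0 < M j0 i0 -> 0 < qform M x.
Proof.
move=> M0 x0 Mji; rewrite qformE (bigD1 i0) //= (bigD1 j0) //= -addrA.
have t0 i j : 0 <= x 0 j * M j i * x 0 i.
  by apply/mulr_ge0/ltW/x0; apply/mulr_ge0/M0/ltW/x0.
rewrite ltr_wpDr ?mulr_gt0 //.
by rewrite addr_ge0 ?sumr_ge0 // => i _; rewrite sumr_ge0.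
Qed.

Section Symmetric.
Variable M : 'M[R]_n.
Hypothesis Msym : M^T = M.

Lemma dot_mulmx_sym x y : dot (x *m M) y = dot (y *m M) x.
Proof.
have tr00 (P : 'M[R]_1) : P 0 0 = P^T 0 0 by rewrite mxE.
by rewrite /dot tr00 !trmx_mul trmxK Msym mulmxA.
Qed.

Lemma qform_shift x y t :
  qform M (x + t *: y) = qform M x + 2 * t * dot (x *m M) y + t ^+ 2 * qform M y.
Proof.
rewrite /qform mulmxDl -scalemxAl !(dotDl, dotDr, dotZl, dotZr) (dot_mulmx_sym y x).
by rewrite expr2; ring.
Qed.

End Symmetric.
End QuadraticForm.

Section Rayleigh.
Variables (R : realType) (n : nat) (M : 'M[R]_n).
Hypothesis Msym : M^T = M.
Implicit Types (x y z : 'rV[R]_n).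

Lemma qform_max_exists : (0 < n)%N ->
  exists y, dot y y = 1 /\ forall z, qform M z <= qform M y * dot z z.
Proof.
move=> n0; pose e0 : 'rV[R]_n := \row_j (j == Ordinal n0)%:R.
have e01 : dot e0 e0 = 1.
  rewrite dotE (bigD1 (Ordinal n0)) //= big1 => [|i /negbTE i0]; last by rewrite !mxE i0 mulr0.
  by rewrite !mxE eqxx mulr1 addr0.
have [y /set_mem /= y1 ymax] := EVT_max_rV (ex_intro _ e0 e01) (@unit_sphere_compact R n)
  (continuous_subspaceT (@qform_continuous R n M)).
exists y; split => // z; have [->|z0] := eqVneq z 0.
  by rewrite /qform mul0mx /dot !mul0mx mxE mulr0.
set c := Num.sqrt (dot z z); have c0 : 0 < c by rewrite sqrtr_gt0 dot_gt0.
have cc : c ^+ 2 = dot z z by rewrite sqr_sqrtr ?dot_ge0.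
have zc1 : dot (c^-1 *: z) (c^-1 *: z) = 1.
  by rewrite dotZl dotZr mulrA -expr2 exprVn cc mulVf ?gt_eqF ?dot_gt0.
have := ymax _ (mem_set zc1); rewrite qformZ exprVn cc.
by rewrite ler_pdivrMl ?dot_gt0 // mulrC.
Qed.

Lemma qform_max_eigen mu z : (forall t, qform M t <= mu * dot t t) ->
  qform M z = mu * dot z z -> z *m M = mu *: z.
Proof.
move=> qmax qz; have [w ew] : exists w, w = z *m M - mu *: z by eexists.
have zw : dot (z *m M) w - mu * dot z w = dot w w by rewrite ew dotDl dotNl dotZl.
set c := dot w w in zw *; set d := qform M w - mu * dot w w.
have d0 : d <= 0 by rewrite subr_le0.
(* [t = 0] maximises [qform M (z + t w) - mu * |z + t w|^2], with slope [2 |w|^2] there. *)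
have ht t : 2 * t * c + t ^+ 2 * d <= 0.
  have := qmax (z + t *: w); rewrite qform_shift // qz -subr_ge0.
  rewrite !(dotDl, dotDr, dotZl, dotZr) (dotC w z) -zw /d /c => h.
  by rewrite -oppr_ge0; apply: le_trans h _; rewrite le_eqVlt; apply/orP; left; apply/eqP; ring.
suff /eqP : c = 0 by rewrite dot_eq0 ew subr_eq0 => /eqP.
apply/eqP; rewrite eq_le dot_ge0 andbT leNgt; apply/negP => c0.
have e0 : 0 < 1 - d by rewrite subr_gt0 (le_lt_trans d0) ?ltr01.
have := ht (c / (1 - d)).
have -> : 2 * (c / (1 - d)) * c + (c / (1 - d)) ^+ 2 * d = c ^+ 2 / (1 - d) ^+ 2 * (2 - d).
  by field; rewrite gt_eqF.
by rewrite pmulr_rle0 ?divr_gt0 ?exprn_gt0 //; lra.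
Qed.

Lemma sup_eigenvalue_qform mu : (forall z, qform M z <= mu * dot z z) ->
  eigenvalue M mu -> sup [set l | eigenvalue M l] = mu.
Proof.
move=> qmax ev.
have ub : ubound [set l | eigenvalue M l] mu.
  move=> l /= /eigenvalueP [v vl v0]; have := qmax v.
  by rewrite /qform vl dotZl ler_pM2r ?dot_gt0.
apply/eqP; rewrite eq_le (ge_sup (ex_intro _ mu ev) ub) /=.
exact: (sup_upper_bound (conj (ex_intro _ mu ev) (ex_intro _ mu ub))).
Qed.

Lemma sup_eigenvalue_rayleigh : (0 < n)%N -> exists y, [/\ dot y y = 1,
  qform M y = sup [set l | eigenvalue M l] &
  forall z, qform M z <= sup [set l | eigenvalue M l] * dot z z].
Proof.
move=> n0; have [y [y1 ymax]] := qform_max_exists n0.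
have ev : eigenvalue M (qform M y).
  apply/eigenvalueP; exists y; last by rewrite -dot_eq0 y1 oner_neq0.
  by apply: qform_max_eigen; rewrite // y1 mulr1.
by exists y; rewrite (sup_eigenvalue_qform ymax ev).
Qed.

End Rayleigh.

Section AdjacencySpectrum.
Variables (R : realType) (T : finType).
Implicit Types (g : rel T) (z : 'rV[R]_#|T|).
Local Notation A g := (adj_mx R g).

Lemma adj_mxE g x y : A g (enum_rank x) (enum_rank y) = (g x y)%:R.
Proof. by rewrite mxE !enum_rankK. Qed.

Lemma adj_mx_ge0 g i j : 0 <= A g i j.
Proof. by rewrite mxE ler0n. Qed.

Lemma adj_mx_sym g : symmetric g -> (A g)^T = A g.
Proof. by move=> gs; apply/matrixP => i j; rewrite !mxE gs. Qed.

Lemma adj_eigenvector_gt0 g mu z : symmetric g -> connected_graph g ->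
  (forall i, 0 <= z 0 i) -> z != 0 -> z *m A g = mu *: z -> forall i, 0 < z 0 i.
Proof.
move=> gs gc z0 nz zeig i; rewrite lt_def z0 andbT; apply: contraNneq nz => zi.
have zero_nbr u w : z 0 (enum_rank u) = 0 -> g u w -> z 0 (enum_rank w) = 0.
  move=> zu guw; have : (z *m A g) 0 (enum_rank u) = 0 by rewrite zeig mxE zu mulr0.
  rewrite mxE => /eqP; rewrite psumr_eq0 => [|j _]; last by rewrite mulr_ge0 ?adj_mx_ge0.
  by move=> /allP /(_ (enum_rank w) (mem_index_enum _)); rewrite adj_mxE gs guw mulr1 => /eqP.
suff zw w : z 0 (enum_rank w) = 0 by apply/eqP/rowP => j; rewrite mxE -[j]enum_valK zw.
have /connectP [p /path_induced [pp _] ->] := connected_graph_connect (enum_val i) w gc.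
have : z 0 (enum_rank (enum_val i)) = 0 by rewrite enum_valK.
elim: p (enum_val i) pp => //= x p IHp u /andP [gux pp] zu.
exact: IHp x pp (zero_nbr u x zu gux).
Qed.

Lemma qform_adj_lt g g' z : subrel g g' -> (exists x y, g' x y && ~~ g x y) ->
  (forall i, 0 < z 0 i) -> qform (A g) z < qform (A g') z.
Proof.
move=> gg' [x [y /andP [g'xy ngxy]]] z0; rewrite -subr_gt0 -qformBl.
apply: (qform_gt0 (i0 := enum_rank y) (j0 := enum_rank x)) => //.
  move=> i j; rewrite !mxE subr_ge0 ler_nat.
  by case: (g _ _) (@gg' (enum_val i) (enum_val j)) => // ->.
by rewrite !mxE !enum_rankK g'xy (negbTE ngxy) subr0 ltr01.
Qed.

Lemma spec_rad_lt_subrel g g' : symmetric g -> symmetric g' -> subrel g g' ->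
  connected_graph g -> (exists x y, g' x y && ~~ g x y) -> spec_rad R g < spec_rad R g'.
Proof.
move=> gs gs' gg' gc new.
have n0 : (0 < #|T|)%N by case: new => x _; apply/card_gt0P; exists x.
have [y [y1 qy qmax]] := sup_eigenvalue_rayleigh (adj_mx_sym gs) n0.
have [_ [_ _ qmax']] := sup_eigenvalue_rayleigh (adj_mx_sym gs') n0.
rewrite -/(spec_rad R g) in qy qmax; rewrite -/(spec_rad R g') in qmax'.
pose z := \row_i `|y 0 i|.
have zge0 i : 0 <= z 0 i by rewrite mxE.
have z1 : dot z z = 1.
  by rewrite -y1 !dotE; apply: eq_bigr => i _; rewrite mxE -normrM ger0_norm // -expr2 sqr_ge0.
have qz : qform (A g) z = spec_rad R g * dot z z.
  apply/eqP; rewrite eq_le qmax z1 mulr1 -qy qform_norm_ge //; exact: adj_mx_ge0.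
have z0 : z != 0 by rewrite -dot_eq0 z1 oner_neq0.
have zpos := adj_eigenvector_gt0 gs gc zge0 z0
  (qform_max_eigen (adj_mx_sym gs) qmax qz).
rewrite -[spec_rad R g]mulr1 -z1 -qz.
by apply: lt_le_trans (qform_adj_lt gg' new zpos) _; rewrite -[leRHS]mulr1 -z1 qmax'.
Qed.

End AdjacencySpectrum.

Local Close Scope ring_scope.

Theorem proposition2p1 (R : realType) (k phi : nat) (g : rel 'I_k) (D : {set 'I_k}) :
  Bl phi g -> max_dissociation_set g D ->
  ((exists B : {set 'I_k}, block g B /\ #|B :&: D| = 0%N) \/
   (exists v : 'I_k, v \in D /\ cut_vertex g v) \/
   (exists B1 B2 : {set 'I_k}, adjacent_blocks g B1 B2 /\
      #|B1 :&: D| = 1%N /\ #|B2 :&: D| = 1%N)) ->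
  ~ max_spectral_in_Bl R phi g.
Proof.
move=> [[gi gs] hb dn] [dD cD] cases [_ maxg].
have [B1 [B2 [v [[bB1 bB2 nB vB1 vB2] dD']]]] : dissociation_mergeable g D.
  case: cases => [[B [bB BD]]|[[v [vD cut]]|[B1 [B2 [adj [c1 c2]]]]]].
  - exact: (mergeable_block_without_D gs hb dD cD bB BD).
  - exact: (mergeable_cut_vertex_in_D gs gi hb dD vD cut).
  - exact: (mergeable_adjacent_single_D gs gi hb dD adj c1 c2).
have simple' := merge_blocks_simple gs gi B1 B2.
have Bl' : Bl phi (merge_blocks g B1 B2).
  split=> //; first exact: (merge_blocks_block_graph gs hb bB1 bB2 vB1 vB2).
  by rewrite (diss_number_subrel (merge_blocks_sub B1 B2) dD' cD).
have := maxg _ Bl'; rewrite leNgt (spec_rad_lt_subrel R gs simple'.2 (merge_blocks_sub B1 B2) hb.1) //.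
exact: (merge_blocks_proper gs hb bB1 bB2 nB vB1 vB2).
Qed.
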